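(* Let $T=(F_0,F_1)$ be the template of order $10$ and type $(4,4,4,4)$ (relational rows $0$–$3$, relational columns $0$–$3$) in which the entry in row $i$, column $j$ is the pair $F_0[i,j]F_1[i,j]$ given by row 0: 11 00 00 00 01 01 01 10 10 10; row 1: 00 11 00 00 01 01 01 10 10 10; row 2: 00 00 11 00 10 10 10 01 01 01; row 3: 00 00 00 11 10 10 10 01 01 01; row 4: 10 10 01 01 11 11 00 00 00 00; row 5: 10 10 01 01 11 11 00 00 00 00; row 6: 10 10 01 01 00 00 11 11 00 00; row 7: 01 01 10 10 00 00 11 11 00 00; row 8: 01 01 10 10 00 00 00 00 11 11; row 9: 01 01 10 10 00 00 00 00 11 11. Then there is no $4$-net of order $10$ that is a refinement of $T$.
   Context: A $k$-net of order $n$: a set of $n^2$ points and $kn$ lines (subsets of size $n$), each point on $k$ lines, lines partitioned into $k$ parallel classes $\Pi_0,\dots,\Pi_{k-1}$ of $n$ pairwise disjoint lines, lines from different classes meeting in exactly one point. For $n$ even and even $\lambda_i$, a template of order $n$ and type $(\lambda_0,\dots,\lambda_{k-1})$ is a list $(F_0,\dots,F_{k-3})$ of $n\times n$ $\{0,1\}$-arrays, $F_{t-2}$ having exactly $\lambda_t$ ones in each row and column, mutually orthogonal (for $F,F'$ with $\lambda,\mu$ ones per row, each pair $(a,b)$ occurs in exactly $f_af'_b$ cells with $f_1=\lambda,f_0=n-\lambda,f'_1=\mu,f'_0=n-\mu$), with rows $0,\dots,\lambda_0-1$ and columns $0,\dots,\lambda_1-1$ called relational, and such that for each cell $(i,j)$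 the number of ones among $x,y,F_0[i,j],\dots,F_{k-3}[i,j]$ (where $x=1$ iff row $i$ relational, $y=1$ iff column $j$ relational) is congruent to $\frac12\sum\lambda_i$ mod $2$. A $k$-net $N$ with parallel classes $\Pi_0,\dots,\Pi_{k-1}$ is a refinement of $T$ if the lines of $\Pi_0$ and $\Pi_1$ can be labelled $0,\dots,n-1$ so that, identifying each point with the cell (label of its $\Pi_0$-line, label of its $\Pi_1$-line), for every $t\ge 2$ each line of $\Pi_t$ consists of cells on which $F_{t-2}$ is constant. *)

From mathcomp Require Import all_boot all_fingroup.
Set Implicit Arguments. Unset Strict Implicit. Unset Printing Implicit Defensive.

Definition is_net (n k : nat) (P : finType) (L : 'I_k -> 'I_n -> {set P}) : Prop :=
  [/\ #|P| = n ^ 2,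
      (forall t i, #|L t i| = n),
      (forall t i j, i != j -> [disjoint L t i & L t j]),
      (forall t s i j, t != s -> #|L t i :&: L s j| = 1)
    & (forall x : P, #|[set p : 'I_k * 'I_n | x \in L p.1 p.2]| = k)].

(* N is a refinement of the template F (F t = F_t, i.e. the array used by
   parallel class t+2): lines of Pi_0 and Pi_1 are relabelled by bijections
   s0, s1; a point on Pi_0-line a and Pi_1-line b is the cell (s0 a, s1 b);
   each line of Pi_t (t >= 2) consists of cells on which F_(t-2) is constant. *)
Definition refines (n k : nat) (P : finType) (L : 'I_k -> 'I_n -> {set P})
    (F : nat -> 'I_n -> 'I_n -> bool) : Prop :=
  exists (s0 s1 : {perm 'I_n}),
    forall (t : 'I_k), 2 <= val t -> forall (i : 'I_n) (x y : P),
      x \in L t i -> y \in L t i ->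
      forall (t0 t1 : 'I_k) (a b c d : 'I_n), val t0 = 0 -> val t1 = 1 ->
        x \in L t0 a -> x \in L t1 b -> y \in L t0 c -> y \in L t1 d ->
        F (val t - 2) (s0 a) (s1 b) = F (val t - 2) (s0 c) (s1 d).

(* The template T of order 10, type (4,4,4,4): entry = 10*F0[i,j] + F1[i,j]. *)
Definition T_data : seq (seq nat) :=
  [:: [:: 11; 0; 0; 0; 1; 1; 1; 10; 10; 10];
      [:: 0; 11; 0; 0; 1; 1; 1; 10; 10; 10];
      [:: 0; 0; 11; 0; 10; 10; 10; 1; 1; 1];
      [:: 0; 0; 0; 11; 10; 10; 10; 1; 1; 1];
      [:: 10; 10; 1; 1; 11; 11; 0; 0; 0; 0];
      [:: 10; 10; 1; 1; 11; 11; 0; 0; 0; 0];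
      [:: 10; 10; 1; 1; 0; 0; 11; 11; 0; 0];
      [:: 1; 1; 10; 10; 0; 0; 11; 11; 0; 0];
      [:: 1; 1; 10; 10; 0; 0; 0; 0; 11; 11];
      [:: 1; 1; 10; 10; 0; 0; 0; 0; 11; 11]].

Definition T_entry (i j : 'I_10) : nat := nth 0 (nth [::] T_data i) j.

Definition T (t : nat) (i j : 'I_10) : bool :=
  if t == 0 then T_entry i j %/ 10 == 1 else T_entry i j %% 10 == 1.

From mathcomp Require Import all_boot all_fingroup.
Set Implicit Arguments. Unset Strict Implicit. Unset Printing Implicit Defensive.

(* Let x0 be the point in cell (6, 6) and l its line in Pi_2. The line l meets
   every row and every column once, so its cells form the graph of a
   permutation f of 'I_10 with f 6 = 6, and F_0 is constant on l, whence
   F_0[r, f r] = 1 for every row r. The value of F_1 on the cell of a point is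
   constant on the lines of Pi_3, and a function constant on the lines of one
   class has the same sum along every line of any other class: along a row that
   sum is 4, so exactly four cells (r, f r) carry F_1 = 1. A pruned search over
   the permutations allowed by F_0 shows that no such f exists. *)

Section Net.

Variables (n k : nat) (P : finType) (L : 'I_k -> 'I_n -> {set P}).
Hypothesis netL : is_net L.

Lemma net_line_uniq t i j x : x \in L t i -> x \in L t j -> i = j.
Proof.
case: netL => _ _ disjL _ _ xi xj; apply/eqP; apply: contraLR xi => ij.
by rewrite (disjointFl (disjL t i j ij) xj).
Qed.

Lemma net_line_exists x t : exists i, x \in L t i.
Proof.
case: netL => _ _ _ _ degL; set S := [set p : 'I_k * 'I_n | x \in L p.1 p.2].
have injS : {in S &, injective fst}.
  move=> [t1 i1] [t2 i2]; rewrite !inE /= => x1 x2 t12; rewrite -t12 in x2.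
  by rewrite t12 (net_line_uniq x1 x2).
have : [set p.1 | p in S] = setT.
  by apply/eqP; rewrite eqEcard subsetT cardsT card_ord card_in_imset // /S degL leqnn.
move/setP/(_ t); rewrite inE => /imsetP[[t' i] + /= tt'].
by rewrite inE -tt'; exists i.
Qed.

Definition line t x : 'I_n := xchoose (net_line_exists x t).

Lemma line_in t x : x \in L t (line t x).
Proof. exact: xchooseP (net_line_exists x t). Qed.

Lemma in_line t i x : (x \in L t i) = (line t x == i).
Proof.
apply/idP/eqP => [xi | <-]; last exact: line_in.
exact: net_line_uniq (line_in t x) xi.
Qed.

Lemma meet_set1 t s i j : t != s -> exists x, L t i :&: L s j = [set x].
Proof. by case: netL => _ _ _ meetL _ ts; apply/cards1P; rewrite meetL. Qed.

Lemma line_inj t s i : t != s -> {in L t i &, injective (line s)}.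
Proof.
move=> ts x y xi yi xy; have [z tisj] := meet_set1 i (line s x) ts.
have : x \in L t i :&: L s (line s x) by rewrite inE xi line_in.
have : y \in L t i :&: L s (line s x) by rewrite inE yi xy line_in.
by rewrite tisj !inE => /eqP-> /eqP->.
Qed.

Lemma line_section t s i : t != s ->
  exists p : 'I_n -> P, forall j, p j \in L t i :&: L s j.
Proof.
move=> ts; apply: (@fin_all_exists _ (fun=> P) (fun j x => x \in L t i :&: L s j)) => j.
by have [x tisj] := meet_set1 i j ts; exists x; rewrite tisj set11.
Qed.

Lemma big_line_section t s i (p : 'I_n -> P) (g : P -> nat) : t != s ->
  (forall j, p j \in L t i :&: L s j) -> \sum_(x in L t i) g x = \sum_j g (p j).
Proof.
move=> ts p_on; rewrite (partition_big (line s) predT) //=.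
apply: eq_bigr => j _; have [z tisj] := meet_set1 i j ts.
have /set1P-> : p j \in [set z] by rewrite -tisj.
rewrite -(big_set1 addn z g) -tisj; apply: eq_bigl => x.
by rewrite inE [x \in L s j]in_line.
Qed.

Lemma big_line_along t s i (g : 'I_n -> nat) : t != s ->
  \sum_(x in L t i) g (line s x) = \sum_j g j.
Proof.
move=> ts; have [p p_on] := line_section i ts.
rewrite (big_line_section _ ts p_on); apply: eq_bigr => j _.
by have /setIP[_] := p_on j; rewrite in_line => /eqP->.
Qed.

Lemma line_sums_eq t s s' i i' (g : P -> nat) : s != t -> s' != t ->
    (forall j, {in L t j &, forall x y, g x = g y}) ->
  \sum_(x in L s i) g x = \sum_(x in L s' i') g x.
Proof.
move=> st s't g_const; have [p p_on] := line_section i st.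
have [p' p'_on] := line_section i' s't.
rewrite (big_line_section _ st p_on) (big_line_section _ s't p'_on).
apply: eq_bigr => j _; apply: (g_const j).
  by case/setIP: (p_on j).
by case/setIP: (p'_on j).
Qed.

Lemma line_sum_row t t0 t1 s i a (G : 'I_n -> 'I_n -> nat) :
    s != t -> t0 != t -> t0 != t1 ->
    (forall j, {in L t j &, forall x y,
      G (line t0 x) (line t1 x) = G (line t0 y) (line t1 y)}) ->
  \sum_(x in L s i) G (line t0 x) (line t1 x) = \sum_b G a b.
Proof.
move=> st t0t t01 G_const; rewrite (line_sums_eq i a st t0t G_const).
rewrite -(big_line_along a (G a) t01); apply: eq_bigr => x.
by rewrite in_line => /eqP->.
Qed.

Lemma cell_point t0 t1 a b : t0 != t1 ->
  exists x, line t0 x = a /\ line t1 x = b.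
Proof.
move=> t01; have [x tisj] := meet_set1 a b t01.
have /setIP[] : x \in L t0 a :&: L t1 b by rewrite tisj set11.
by rewrite !in_line => /eqP xa /eqP xb; exists x.
Qed.

Lemma line_cells t t0 t1 i : t != t0 -> t != t1 -> t0 != t1 ->
  exists sigma : {perm 'I_n},
    forall x, (x \in L t i) = (line t1 x == sigma (line t0 x)).
Proof.
move=> tt0 tt1 t01; have [p p_on] := line_section i tt0.
have p_in a : p a \in L t i by case/setIP: (p_on a).
have p_row a : line t0 (p a) = a by case/setIP: (p_on a) => _; rewrite in_line => /eqP.
have sigma_inj : injective (fun a => line t1 (p a)).
  by move=> a b /(line_inj tt1 (p_in a) (p_in b)) pab; rewrite -[a]p_row pab p_row.
exists (perm sigma_inj) => x; rewrite permE; apply/idP/eqP => [xi | x_cell].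
  by rewrite (line_inj tt0 (p_in _) xi (p_row _)).
have p_col : p (line t0 x) \in L t0 (line t0 x) by rewrite in_line p_row.
by rewrite (line_inj t01 (line_in t0 x) p_col x_cell).
Qed.

Lemma big_line_cells t t0 t1 i (sigma : 'I_n -> 'I_n) (G : 'I_n -> 'I_n -> nat) :
    t != t0 -> (forall x, (x \in L t i) = (line t1 x == sigma (line t0 x))) ->
  \sum_(x in L t i) G (line t0 x) (line t1 x) = \sum_a G a (sigma a).
Proof.
move=> tt0 cells; rewrite -(big_line_along i (fun a => G a (sigma a)) tt0).
by apply: eq_bigr => x; rewrite cells => /eqP->.
Qed.

Lemma refines_cellwise F : refines L F ->
  exists s0 s1 : {perm 'I_n}, forall t t0 t1 : 'I_k,
    2 <= t -> t0 = 0 :> nat -> t1 = 1 :> nat -> forall i,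
    {in L t i &, forall x y, F (t - 2) (s0 (line t0 x)) (s1 (line t1 x))
                           = F (t - 2) (s0 (line t0 y)) (s1 (line t1 y))}.
Proof.
case=> s0 [s1 refL]; exists s0, s1 => t t0 t1 t_ge2 t00 t11 i x y xi yi.
exact: refL t_ge2 i x y xi yi t0 t1 _ _ _ _ t00 t11 (line_in _ _) (line_in _ _)
  (line_in _ _) (line_in _ _).
Qed.

End Net.

(* [enum 'I_10] does not evaluate under [vm_compute], since [insub] is defined
   through the opaque [idP]; [insub_eq] is its transparent twin. *)
Definition ords10 : seq 'I_10 := pmap (@insub_eq _ _ 'I_10) (iota 0 10).

Lemma ords10E : ords10 = enum 'I_10.
Proof. by rewrite enumT unlock /= /ords10 (eq_pmap (@insub_eqE _ _ 'I_10)). Qed.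

Lemma big_ords10 (F : 'I_10 -> nat) : \sum_r F r = \sum_(r <- ords10) F r.
Proof. by rewrite ords10E big_enum. Qed.

Lemma T1_row_sum r : \sum_c (T 1 r c : nat) = 4.
Proof.
have : all (fun r => \sum_(c <- ords10) (T 1 r c : nat) == 4) ords10.
  by rewrite unlock; vm_compute.
by rewrite big_ords10 => /allP/(_ r); rewrite ords10E mem_enum => /(_ isT)/eqP.
Qed.

Definition allowed_cols (r : 'I_10) : seq 'I_10 :=
  [seq c <- ords10 | T 0 r c & (val r == 6) ==> (val c == 6)].

Fixpoint no_completion4 (rs used : seq 'I_10) (ones : nat) : bool :=
  if rs is r :: rs' then
    all (fun c => (c \in used) || no_completion4 rs' (c :: used) (ones + T 1 r c))
      (allowed_cols r)
  else ones != 4.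

Lemma no_completion4_sound rs used ones (f : 'I_10 -> 'I_10) :
    no_completion4 rs used ones -> {in rs, forall r, f r \in allowed_cols r} ->
    uniq (map f rs ++ used) ->
  ones + \sum_(r <- rs) T 1 r (f r) != 4.
Proof.
elim: rs used ones => [|r rs IHrs] used ones /=; first by rewrite big_nil addn0.
move=> /allP search f_allowed_cols uniq_all.
have fr_new : f r \notin used.
  by move: uniq_all; rewrite /= mem_cat negb_or => /andP[/andP[_ ->]].
have := search _ (f_allowed_cols r (mem_head _ _)); rewrite (negbTE fr_new) /= => search_r.
rewrite big_cons addnA; apply: IHrs search_r _ _.
- by move=> r' r'_in; apply: f_allowed_cols; rewrite inE r'_in orbT.
- by rewrite -cat1s uniq_catCA.
Qed.

Lemma no_completion4_T : no_completion4 ords10 [::] 0.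
Proof. by vm_compute. Qed.

Lemma T_no_transversal (f : 'I_10 -> 'I_10) :
    injective f -> (forall r, T 0 r (f r)) -> (forall r, val r = 6 -> f r = r) ->
  \sum_r (T 1 r (f r) : nat) != 4.
Proof.
move=> f_inj f_T0 f6; have := no_completion4_sound (f := f) no_completion4_T.
rewrite add0n cats0 big_ords10 map_inj_uniq //; apply; last by rewrite ords10E enum_uniq.
move=> r _; rewrite mem_filter ords10E mem_enum f_T0 andbT; apply/implyP => /eqP r6.
by rewrite f6 // r6.
Qed.

Theorem mainTheorem5 (P : finType) (L : 'I_4 -> 'I_10 -> {set P}) :
  is_net L -> ~ refines L T.
Proof.
move=> netL /(refines_cellwise netL)[s0 [s1 cellwise]].
pose o0 : 'I_4 := @Ordinal 4 0 isT; pose o1 : 'I_4 := @Ordinal 4 1 isT.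
pose o2 : 'I_4 := @Ordinal 4 2 isT; pose o3 : 'I_4 := @Ordinal 4 3 isT.
pose r6 : 'I_10 := @Ordinal 10 6 isT.
have [x0 [x0_row x0_col]] := cell_point netL (s0^-1 r6)%g (s1^-1 r6)%g (isT : o0 != o1).
set l := line netL o2 x0.
have [sigma l_cells] := line_cells netL l (isT : o2 != o0) (isT : o2 != o1) (isT : o0 != o1).
pose G a b : nat := T 1 (s0 a) (s1 b).
have sum_l : \sum_a G a (sigma a) = 4.
  rewrite -(big_line_cells G (isT : o2 != o0) l_cells).
  rewrite (line_sum_row l (s0^-1 r6)%g (isT : o2 != o3) (isT : o0 != o3) (isT : o0 != o1)).
    by rewrite /G permKV -[RHS](T1_row_sum r6) [RHS](reindex_perm s1).
  by move=> j x y xj yj; rewrite /G (cellwise o3 o0 o1 isT erefl erefl j x y xj yj).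
pose f r := s1 (sigma (s0^-1 r)%g).
have f_inj : injective f by move=> r r' /perm_inj/perm_inj/perm_inj.
have f_T0 r : T 0 r (f r).
  have [x [x_row x_col]] := cell_point netL (s0^-1 r)%g (sigma (s0^-1 r)%g) (isT : o0 != o1).
  have x_on_l : x \in L o2 l by rewrite l_cells x_row x_col.
  have := cellwise o2 o0 o1 isT erefl erefl l x x0 x_on_l (line_in netL o2 x0).
  by rewrite x_row x_col x0_row x0_col !permKV => ->.
have f_r6 r : val r = 6 -> f r = r.
  move=> r_6; have -> : r = r6 by apply: val_inj.
  have := line_in netL o2 x0; rewrite l_cells x0_row x0_col => /eqP sigma_r6.
  by rewrite /f -sigma_r6 permKV.
move: (T_no_transversal f_inj f_T0 f_r6).
by rewrite (reindex_perm s0) (eq_bigr (fun a => G a (sigma a))) ?sum_l // => a _; rewrite /G /f permK.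
Qed.
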